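(* For any real $r \in [0,1]$, the sequence $\left(c_q^{1/(q+r)}\right)_{q \geq 2}$ is strictly decreasing.
   Context: For integers $q \geq 1$, $c_q := \sqrt{\lfloor (q+2)^2/4 \rfloor}$. *)

From Stdlib Require Import Reals Lra Lia.
Open Scope R_scope.

Definition c (q : nat) : R := sqrt (INR (Nat.div ((q + 2) * (q + 2)) 4)).

(* the sequence term c_q^(1/(q+r)); c_q >= sqrt 2 > 0 for q >= 1, so Rpower is the real power *)
Definition a (r : R) (q : nat) : R := Rpower (c q) (1 / (INR q + r)).

(* Write x_q := floor((q+2)^2/4), so that c_q = sqrt x_q and x_q is (m+1)^2 for
   q = 2m and (m+1)(m+2) for q = 2m+1.  Taking logarithms, the claim
   x_(q+1)^(1/(q+1+r)) < x_q^(1/(q+r)) follows from x_(q+1)^(q+1) < x_q^(q+2),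
   because the ratio ln x_(q+1) / ln x_q is then below 1 + 1/(q+1) <= 1 + 1/(q+r).
   In both parities that inequality reduces to (n+1)^(2n-1) < n^(2n+1) for
   n = m+1 >= 2: 27 < 32 for n = 2, and (1 + 1/n)^(2n-1) < e^2 <= 9 <= n^2 for n >= 3. *)
From Stdlib Require Import Reals Lra Lia.
Open Scope R_scope.

Lemma pow_le_exp_mul (t : R) (n : nat) : 0 <= 1 + t -> (1 + t) ^ n <= exp (INR n * t).
Proof.
  intros Ht.
  replace (exp (INR n * t)) with (exp t ^ n)
    by (rewrite <- Rpower_pow by apply exp_pos; unfold Rpower; rewrite ln_exp; reflexivity).
  apply pow_incr; split; [exact Ht | apply exp_ineq1_le].
Qed.

Lemma succ_pow_lt_pow_add2 (x : R) (n : nat) :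
  3 <= x -> INR n < 2 * x -> (x + 1) ^ n < x ^ (n + 2).
Proof.
  intros Hx Hn.
  assert (Hsplit : (x + 1) ^ n = x ^ n * (1 + / x) ^ n).
  { rewrite <- Rpow_mult_distr; f_equal; field; lra. }
  assert (Hexp : (1 + / x) ^ n < exp 2).
  { assert (0 < / x) by (apply Rinv_0_lt_compat; lra).
    eapply Rle_lt_trans; [apply pow_le_exp_mul; lra |].
    apply exp_increasing.
    apply Rmult_lt_reg_r with x; [lra |].
    rewrite Rmult_assoc, Rinv_l by lra; lra. }
  assert (He2 : exp 2 <= x ^ 2).
  { replace 2 with (1 + 1) by ring.
    rewrite exp_plus; pose proof exp_le_3; pose proof (exp_pos 1); simpl; nra. }
  rewrite Hsplit, pow_add.
  apply Rmult_lt_compat_l; [apply pow_lt; lra | lra].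
Qed.

Lemma succ_pow_lt_pow (m : nat) : (1 <= m)%nat ->
  ((m + 2) ^ (2 * m + 1) < (m + 1) ^ (2 * m + 3))%nat.
Proof.
  intros Hm.
  destruct (Nat.eq_dec m 1) as [-> | Hm2]; [simpl; lia |].
  apply INR_lt; rewrite !pow_INR.
  replace (INR (m + 2)) with (INR (m + 1) + 1) by (rewrite !plus_INR; simpl; ring).
  replace (2 * m + 3)%nat with (2 * m + 1 + 2)%nat by lia.
  apply succ_pow_lt_pow_add2; rewrite ?plus_INR, ?mult_INR; simpl.
  - assert (2 <= INR m) by (apply (le_INR 2); lia); lra.
  - lra.
Qed.

Definition csq (q : nat) : nat := Nat.div ((q + 2) * (q + 2)) 4.

Lemma csq_even (m : nat) : csq (2 * m) = ((m + 1) * (m + 1))%nat.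
Proof. symmetry; apply (Nat.div_unique _ _ _ 0); nia. Qed.

Lemma csq_odd (m : nat) : csq (2 * m + 1) = ((m + 1) * (m + 2))%nat.
Proof. symmetry; apply (Nat.div_unique _ _ _ 1); nia. Qed.

Lemma csq_gt1 (q : nat) : (1 <= q)%nat -> (1 < csq q)%nat.
Proof. intros Hq; apply Nat.div_le_lower_bound; nia. Qed.

Lemma csq_succ_pow_lt (q : nat) : (2 <= q)%nat ->
  (csq (S q) ^ S q < csq q ^ S (S q))%nat.
Proof.
  intros Hq.
  destruct (Nat.Even_or_Odd q) as [[m ->] | [m ->]].
  - replace (S (2 * m)) with (2 * m + 1)%nat by lia.
    rewrite csq_odd, csq_even, !Nat.pow_mul_l.
    replace ((m + 1) ^ S (2 * m + 1) * (m + 1) ^ S (2 * m + 1))%nat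
      with ((m + 1) ^ (2 * m + 1) * (m + 1) ^ (2 * m + 3))%nat
      by (rewrite <- !Nat.pow_add_r; f_equal; lia).
    apply Nat.mul_lt_mono_pos_l; [apply Nat.neq_0_lt_0, Nat.pow_nonzero; lia |].
    apply succ_pow_lt_pow; lia.
  - replace (S (2 * m + 1)) with (2 * (m + 1))%nat by lia.
    replace (S (2 * (m + 1))) with (2 * m + 3)%nat by lia.
    rewrite csq_odd, csq_even, !Nat.pow_mul_l.
    replace (m + 1 + 1)%nat with (m + 2)%nat by lia.
    replace ((m + 2) ^ (2 * (m + 1)) * (m + 2) ^ (2 * (m + 1)))%nat
      with ((m + 2) ^ (2 * m + 3) * (m + 2) ^ (2 * m + 1))%nat
      by (rewrite <- !Nat.pow_add_r; f_equal; lia).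
    rewrite (Nat.mul_comm ((m + 1) ^ _)).
    apply Nat.mul_lt_mono_pos_l; [apply Nat.neq_0_lt_0, Nat.pow_nonzero; lia |].
    apply succ_pow_lt_pow; lia.
Qed.

Lemma root_lt_of_pow_lt (X Y s : R) (n : nat) :
  1 < X -> 0 < Y -> 0 < s <= INR n -> Y ^ n < X ^ S n ->
  Rpower Y (1 / (s + 1)) < Rpower X (1 / s).
Proof.
  intros HX HY Hs Hpow.
  assert (HlnX : 0 < ln X) by (rewrite <- ln_1; apply ln_increasing; lra).
  assert (Hln : INR n * ln Y < INR (S n) * ln X).
  { rewrite <- !ln_pow by lra; apply ln_increasing; [apply pow_lt |]; assumption. }
  rewrite S_INR in Hln.
  (* (s+1) ln X - s ln Y decreases in s when ln Y >= ln X, and is positive at s = n *)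
  assert (Hkey : s * ln Y < (s + 1) * ln X)
    by (destruct (Rle_lt_dec (ln Y) (ln X)); nra).
  unfold Rpower; apply exp_increasing.
  apply Rmult_lt_reg_r with (s * (s + 1)); [nra |].
  replace (1 / (s + 1) * ln Y * (s * (s + 1))) with (s * ln Y) by (field; lra).
  replace (1 / s * ln X * (s * (s + 1))) with ((s + 1) * ln X) by (field; lra).
  exact Hkey.
Qed.

Lemma Rpower_sqrt_comm (x e : R) : 0 < x -> Rpower (sqrt x) e = sqrt (Rpower x e).
Proof.
  intros Hx.
  assert (0 < Rpower x e) by apply exp_pos.
  rewrite <- !Rpower_sqrt by assumption.
  rewrite !Rpower_mult, Rmult_comm; reflexivity.
Qed.

Theorem lemma2p12 (r : R) (hr0 : 0 <= r) (hr1 : r <= 1) :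
  forall q : nat, (2 <= q)%nat -> a r (S q) < a r q.
Proof.
  intros q Hq.
  assert (HX : 1 < INR (csq q)) by (apply (lt_INR 1), csq_gt1; lia).
  assert (HY : 1 < INR (csq (S q))) by (apply (lt_INR 1), csq_gt1; lia).
  assert (Hpow : INR (csq (S q)) ^ S q < INR (csq q) ^ S (S q)).
  { rewrite <- !pow_INR; apply lt_INR, csq_succ_pow_lt, Hq. }
  assert (Hq2 : 2 <= INR q) by (apply (le_INR 2), Hq).
  unfold a, c; fold (csq q) (csq (S q)).
  rewrite !Rpower_sqrt_comm by lra.
  apply sqrt_lt_1; [left; apply exp_pos | left; apply exp_pos |].
  replace (INR (S q) + r) with (INR q + r + 1) by (rewrite S_INR; ring).
  apply root_lt_of_pow_lt with (S q); [lra | lra | rewrite S_INR; lra | exact Hpow].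
Qed.
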